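(* Let $A\subseteq B$ be an extension of commutative rings, and let $\phi:B\to B_{\mathrm{red}}$ be the canonical surjection (so $\phi(A)=A_{\mathrm{red}}\subseteq B_{\mathrm{red}}$). Then the group morphism $\mathfrak{C}(A,B)\to \mathfrak{C}(A_{\mathrm{red}},B_{\mathrm{red}})$ induced by $L\mapsto \phi(L)A_{\mathrm{red}}$ is an isomorphism.
   Context: All rings are commutative with identity; $R_{\mathrm{red}}$ is $R$ modulo its nilradical. For an extension of rings $R\subseteq S$ and $R$-submodules $L,L'$ of $S$, $LL'$ is the $R$-submodule of finite sums $\sum x_ky_k$ with $x_k\in L, y_k\in L'$. An $R$-submodule $L$ of $S$ is an invertible ideal of $R\subseteq S$ if $LL'=R$ for some $R$-submodule $L'$ of $S$; these form an abelian group $\mathscr{G}(R,S)$ under multiplication, and the ideal class group is $\mathfrak{C}(R,S)=\mathscr{G}(R,S)/\{Rx : x\in S^\ast\}$. *)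

From HB Require Import structures.
From mathcomp Require Import all_boot all_order all_algebra.
Set Implicit Arguments. Unset Strict Implicit. Unset Printing Implicit Defensive.
Import GRing.Theory.
Local Open Scope ring_scope.

Section Defs.
Variable S : comPzRingType.

Definition seteq (X Y : S -> Prop) : Prop := forall x, X x <-> Y x.

Definition is_subring (R : S -> Prop) : Prop :=
  [/\ R 1, forall x y, R x -> R y -> R (x - y) & forall x y, R x -> R y -> R (x * y)].

Definition unitS (x : S) : Prop := exists y, x * y = 1.

Definition nilpotentS (x : S) : Prop := exists n : nat, x ^+ n = 0.

Definition submod (R L : S -> Prop) : Prop :=
  [/\ L 0, forall x y, L x -> L y -> L (x + y) & forall r x, R r -> L x -> L (r * x)].

Definition prodsub (L L' : S -> Prop) : S -> Prop :=
  fun z => exists (n : nat) (f g : 'I_n -> S),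
    (forall i, L (f i)) /\ (forall i, L' (g i)) /\ z = \sum_(i < n) f i * g i.

(* invertible ideals of R ⊆ S : elements of 𝒢(R,S) *)
Definition invertible (R L : S -> Prop) : Prop :=
  submod R L /\ exists L', submod R L' /\ seteq (prodsub L L') R.

Definition principal (R : S -> Prop) (x : S) : S -> Prop :=
  fun y => exists r, R r /\ y = r * x.

(* L and L' define the same class in ℭ(R,S) = 𝒢(R,S)/{Rx : x ∈ S^*} *)
Definition same_class (R L L' : S -> Prop) : Prop :=
  exists x, unitS x /\ seteq L' (prodsub L (principal R x)).
End Defs.

Definition img (S T : Type) (f : S -> T) (L : S -> Prop) : T -> Prop :=
  fun y => exists x, L x /\ y = f x.

(** Since an [A]-submodule [L] satisfies [phi(L) A_red = phi(L)], the map is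
    [L |-> phi(L)], which is clearly multiplicative.  The kernel of [phi] is
    nil, so anything congruent to [1] is a unit, and this is what makes the
    map bijective on classes.

    Injectivity: if [phi(L') = phi(L) y], lifting a decomposition
    [1 = sum f_i g_i] ([f_i] in [L], [g_i] in [L^-1]) gives [k] with
    [phi k = y] and [L k ⊆ L'], and symmetrically [k'] with [L' k' ⊆ L].
    Then [k k'] multiplies [L] into itself, so lies in [A], and reduces to
    [1], so is a unit of [A]; hence [L' = L k].

    Surjectivity: an invertible [M] with [1 = sum mu_j mu'_j] yields the
    rank-one idempotent matrix [(mu'_i mu_j)] over [A_red].  Its lift to [A]
    is idempotent up to a nilpotent matrix, and Newton's iteration
    [e |-> 3e^2 - 2e^3] makes it an idempotent [e] over [A].  Lifting the
    row and column, [e] factors as [c b] with [b c = 1]; the [A]-span of the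
    entries of [b] is the required invertible ideal. *)

From HB Require Import structures.
From mathcomp Require Import all_boot all_order all_algebra.
From mathcomp Require Import ring zify.
From Stdlib Require Import ClassicalEpsilon.
Set Implicit Arguments. Unset Strict Implicit. Unset Printing Implicit Defensive.
Import GRing.Theory.
Local Open Scope ring_scope.

Section Submodules.
Variable S : comPzRingType.
Implicit Types (R L N M : S -> Prop) (x y z : S).

Definition mulset L x : S -> Prop := fun z => exists l, L l /\ z = l * x.

Definition span R n (v : 'I_n -> S) : S -> Prop :=
  fun z => exists a : 'I_n -> S, (forall j, R (a j)) /\ z = \sum_(j < n) a j * v j.

Lemma seteq_sym L (L' : S -> Prop) : seteq L L' -> seteq L' L.
Proof. by move=> E z; split=> /E. Qed.

Lemma seteq_trans (L1 L2 L3 : S -> Prop) : seteq L1 L2 -> seteq L2 L3 -> seteq L1 L3.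
Proof. by move=> E1 E2 z; split=> [/E1/E2|/E2/E1]. Qed.

Lemma prodsub_ind L (L' : S -> Prop) (P : S -> Prop) :
  P 0 -> (forall x y, P x -> P y -> P (x + y)) ->
  (forall x y, L x -> L' y -> P (x * y)) -> forall z, prodsub L L' z -> P z.
Proof.
move=> P0 PD PM _ [n [f [g [Lf [Lg ->]]]]].
by apply: (big_ind P) => // i _; apply: PM.
Qed.

Lemma prodsub_sum L (L' : S -> Prop) n (f g : 'I_n -> S) :
  (forall i, L (f i)) -> (forall i, L' (g i)) -> prodsub L L' (\sum_(i < n) f i * g i).
Proof. by move=> Lf Lg; exists n, f, g. Qed.

Lemma prodsub_mul L (L' : S -> Prop) x y : L x -> L' y -> prodsub L L' (x * y).
Proof. by move=> Lx Ly; exists 1%N, (fun=> x), (fun=> y); rewrite big_ord1. Qed.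

Lemma prodsub0 L (L' : S -> Prop) : prodsub L L' 0.
Proof. by exists 0%N, (fun=> 0), (fun=> 0); rewrite big_ord0; do !split; case. Qed.

Lemma prodsubD L (L' : S -> Prop) x y :
  prodsub L L' x -> prodsub L L' y -> prodsub L L' (x + y).
Proof.
move=> [n [f [g [Lf [Lg ->]]]]] [m [f' [g' [Lf' [Lg' ->]]]]].
pose glue (u : 'I_n -> S) (u' : 'I_m -> S) i :=
  match split i with inl j => u j | inr j => u' j end.
have glueL u u' j : glue u u' (lshift m j) = u j by rewrite /glue (unsplitK (inl j)).
have glueR u u' j : glue u u' (rshift n j) = u' j by rewrite /glue (unsplitK (inr j)).
have -> : \sum_(i < n) f i * g i + \sum_(j < m) f' j * g' j =
          \sum_(i < n + m) glue f f' i * glue g g' i.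
  by rewrite big_split_ord; congr (_ + _); apply: eq_bigr => i _; rewrite ?glueL ?glueR.
by apply: prodsub_sum => i; rewrite /glue; case: (split i).
Qed.

Lemma eq_prodsub (L1 L2 L1' L2' : S -> Prop) :
  seteq L1 L2 -> seteq L1' L2' -> seteq (prodsub L1 L1') (prodsub L2 L2').
Proof.
by move=> E E' z; split=> -[n [f [g [Lf [Lg ->]]]]];
  apply: prodsub_sum => i; apply/E || apply/E'.
Qed.

Lemma eq_mulset L (L' : S -> Prop) x : seteq L L' -> seteq (mulset L x) (mulset L' x).
Proof. by move=> E z; split=> -[l [/E Ll ->]]; exists l. Qed.

Lemma mulset1 L : seteq (mulset L 1) L.
Proof. by move=> z; split=> [[l [Ll ->]]|Lz]; [rewrite mulr1 | exists z; rewrite mulr1]. Qed.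

Lemma submod_seteq R L (L' : S -> Prop) : seteq L L' -> submod R L -> submod R L'.
Proof.
move=> E [L0 LD LM]; split; first exact/E.
  by move=> x y /E Lx /E Ly; apply/E/LD.
by move=> r x Rr /E Lx; apply/E/LM.
Qed.

Lemma submod_sum R L n (f : 'I_n -> S) : submod R L -> (forall i, L (f i)) ->
  L (\sum_(i < n) f i).
Proof. by case=> L0 LD _ Lf; apply: (big_ind L). Qed.

Lemma submod_prodsub R L (L' : S -> Prop) : submod R L -> submod R (prodsub L L').
Proof.
case=> _ _ LM; split; [exact: prodsub0 | exact: prodsubD |].
move=> r _ Rr [n [f [g [Lf [Lg ->]]]]].
rewrite mulr_sumr (eq_bigr (fun i => (r * f i) * g i)) => [|i _]; last exact: mulrA.
by apply: prodsub_sum => // i; apply: LM.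
Qed.

Lemma prodsub_principal R N x : R 1 -> submod R N ->
  seteq (prodsub N (principal R x)) (mulset N x).
Proof.
move=> R1 [N0 ND NM] z; split.
  apply: prodsub_ind => [|_ _ [m [Nm ->]] [m' [Nm' ->]]|n _ Nn [r [Rr ->]]].
  - by exists 0; rewrite mul0r.
  - by exists (m + m'); rewrite mulrDl; split => //; apply: ND.
  - by exists (r * n); rewrite mulrCA mulrA; split => //; apply: NM.
by move=> [m [Nm ->]]; apply: prodsub_mul => //; exists 1; rewrite mul1r.
Qed.

Lemma same_classE R L (L' : S -> Prop) : R 1 -> submod R L ->
  same_class R L L' <-> exists x, unitS x /\ seteq L' (mulset L x).
Proof.
move=> R1 RL; split=> -[x [ux E]]; exists x; split => //.
  exact: seteq_trans E (prodsub_principal x R1 RL).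
exact: seteq_trans E (seteq_sym (prodsub_principal x R1 RL)).
Qed.

Lemma prodsub_ring R N : R 1 -> submod R N -> seteq (prodsub N R) N.
Proof.
move=> R1 [N0 ND NM] z; split; last by move=> Nz; rewrite -[z]mulr1; apply: prodsub_mul.
by apply: prodsub_ind => // n r Nn Rr; rewrite mulrC; apply: NM.
Qed.

Lemma multiplier_mem R L (L2 : S -> Prop) t : submod R R -> seteq (prodsub L L2) R ->
  R 1 -> (forall l, L l -> L (l * t)) -> R t.
Proof.
move=> RR LL2 R1 Lt.
have [n [f [g [Lf [L2g fg1]]]]] : prodsub L L2 1 by apply/LL2.
rewrite -[t]mul1r fg1 mulr_suml; apply: (submod_sum RR) => i.
by rewrite mulrAC; apply/LL2/prodsub_mul => //; apply: Lt.
Qed.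

Lemma span_submod R n (v : 'I_n -> S) : submod R R -> submod R (span R v).
Proof.
case=> R0 RD RM; split.
- by exists (fun=> 0); split => //; rewrite big1 // => j _; rewrite mul0r.
- move=> _ _ [a [Ra ->]] [a' [Ra' ->]]; exists (fun j => a j + a' j).
  split => [j|]; first exact: RD.
  by rewrite -big_split; apply: eq_bigr => j _; rewrite mulrDl.
- move=> r _ Rr [a [Ra ->]]; exists (fun j => r * a j); split => [j|]; first exact: RM.
  by rewrite mulr_sumr; apply: eq_bigr => j _; rewrite mulrA.
Qed.

Lemma span_mulr R n (v : 'I_n -> S) x j : R 0 -> R x -> span R v (x * v j).
Proof.
move=> R0 Rx; exists (fun k => if k == j then x else 0); split => [k|]; first by case: eqP.
by rewrite (bigD1 j) //= eqxx big1 ?addr0 // => k /negbTE ->; rewrite mul0r.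
Qed.

Lemma span_invertible R n (b c : 'I_n -> S) : submod R R -> R 1 ->
  (forall i j, R (b i * c j)) -> \sum_(j < n) b j * c j = 1 -> invertible R (span R b).
Proof.
move=> RR R1 Rbc bc1; case: (RR) => R0 RD RM.
split; first exact: span_submod.
exists (span R c); split; first exact: span_submod.
move=> z; split.
  apply: prodsub_ind => // _ _ [a [Ra ->]] [a' [Ra' ->]].
  rewrite mulr_suml; apply: (submod_sum RR) => j.
  rewrite mulr_sumr; apply: (submod_sum RR) => i.
  by rewrite mulrACA; exact: RM _ _ (RM _ _ (Ra j) (Ra' i)) (Rbc j i).
move=> Rz; rewrite -[z]mulr1 -bc1 mulr_sumr.
rewrite (eq_bigr (fun j => (z * b j) * (1 * c j))) => [|j _]; last by rewrite mul1r mulrA.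
by apply: prodsub_sum => j; apply: span_mulr.
Qed.

Lemma span_eq_invertible R M n (m m' : 'I_n -> S) : submod R M ->
  (forall j, M (m j)) -> (forall j z, M z -> R (z * m' j)) ->
  \sum_(j < n) m j * m' j = 1 -> seteq M (span R m).
Proof.
move=> MM Mm Rm' mm1 z; split.
  move=> Mz; exists (fun j => z * m' j); split => [j|]; first exact: Rm'.
  by rewrite -[LHS]mulr1 -mm1 mulr_sumr; apply: eq_bigr => j _; rewrite mulrA mulrAC.
move=> [a [Ra ->]]; apply: (submod_sum MM) => j.
by case: MM => _ _; apply.
Qed.

Section Subring.
Variable A : S -> Prop.
Hypothesis HA : is_subring A.

Lemma subring1 : A 1. Proof. by case: HA. Qed.

Lemma subringB x y : A x -> A y -> A (x - y). Proof. by case: HA => _ AB _; apply: AB. Qed.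

Lemma subringM x y : A x -> A y -> A (x * y). Proof. by case: HA => _ _ AM; apply: AM. Qed.

Lemma subring0 : A 0. Proof. by rewrite -(subrr 1); apply: subringB subring1 subring1. Qed.

Lemma subringD x y : A x -> A y -> A (x + y).
Proof.
move=> Ax Ay; have -> : x + y = x - (0 - y) by rewrite sub0r opprK.
exact: subringB Ax (subringB subring0 Ay).
Qed.

Lemma subringX x k : A x -> A (x ^+ k).
Proof.
by move=> Ax; elim: k => [|k IHk]; rewrite ?expr0 ?exprS; [apply: subring1 | apply: subringM].
Qed.

Lemma subring_submod : submod A A.
Proof. by split; [exact: subring0 | exact: subringD | exact: subringM]. Qed.

Lemma unipotent_inv t : A t -> nilpotentS (t - 1) -> exists2 s, A s & t * s = 1.
Proof.
move=> At [e te]; exists (\sum_(i < e) (1 - t) ^+ i).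
  by apply: (submod_sum subring_submod) => i; apply/subringX/subringB/At/subring1.
have te' : (1 - t) ^+ e = 0 by rewrite -[1 - t]opprB exprNn te mulr0.
have := subrX1 (1 - t) e; rewrite te' sub0r addrAC subrr add0r mulNr.
by move/oppr_inj/esym.
Qed.

End Subring.

Lemma subringT : is_subring (fun _ : S => True). Proof. by []. Qed.

End Submodules.

Section Image.
Variables (S T : comPzRingType) (phi : {rmorphism S -> T}).
Implicit Types (R L : S -> Prop).

Lemma img_seteq L (L' : S -> Prop) : seteq L L' -> seteq (img phi L) (img phi L').
Proof. by move=> E z; split=> -[x [/E Lx ->]]; exists x. Qed.

Lemma img_submod R L : submod R L -> submod (img phi R) (img phi L).
Proof.
case=> L0 LD LM; split; first by exists 0; rewrite rmorph0.
  move=> _ _ [x [Lx ->]] [y [Ly ->]].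
  by exists (x + y); rewrite rmorphD; split => //; apply: LD.
move=> _ _ [r [Rr ->]] [x [Lx ->]].
by exists (r * x); rewrite rmorphM; split => //; apply: LM.
Qed.

Lemma img_prodsub L (L' : S -> Prop) :
  seteq (img phi (prodsub L L')) (prodsub (img phi L) (img phi L')).
Proof.
move=> z; split.
  move=> [_ [[n [f [g [Lf [Lg ->]]]]] ->]].
  rewrite rmorph_sum (eq_bigr (fun i => phi (f i) * phi (g i))) => [|i _]; last exact: rmorphM.
  by apply: prodsub_sum => i; [exists (f i) | exists (g i)].
apply: prodsub_ind => [|_ _ [x [Px ->]] [y [Py ->]]|_ _ [x [Lx ->]] [y [Ly ->]]].
- by exists 0; rewrite rmorph0; split => //; apply: prodsub0.
- by exists (x + y); rewrite rmorphD; split => //; apply: prodsubD.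
- by exists (x * y); rewrite rmorphM; split => //; apply: prodsub_mul.
Qed.

Lemma img_mulset L x : seteq (img phi (mulset L x)) (mulset (img phi L) (phi x)).
Proof.
move=> z; split=> -[_ [[l [Ll ->]] ->]].
  by exists (phi l); rewrite rmorphM; split => //; exists l.
by exists (l * x); rewrite rmorphM; split => //; exists l.
Qed.

Lemma img_span R n (v : 'I_n -> S) : seteq (img phi (span R v)) (span (img phi R) (phi \o v)).
Proof.
move=> z; split.
  move=> [_ [[a [Ra ->]] ->]]; exists (phi \o a); split => [j|]; first by exists (a j).
  by rewrite rmorph_sum; apply: eq_bigr => j _; rewrite rmorphM.
move=> [a [Ra ->]]; have [a' Ea'] := ClassicalEpsilon.choice _ Ra.
exists (\sum_(j < n) a' j * v j); split; first by exists a'; split => // j; case: (Ea' j).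
by rewrite rmorph_sum; apply: eq_bigr => j _; rewrite rmorphM; case: (Ea' j) => _ ->.
Qed.

Lemma unitS_rmorph x : unitS x -> unitS (phi x).
Proof. by move=> [y xy]; exists (phi y); rewrite -rmorphM xy rmorph1. Qed.

End Image.

Definition newton_idem (R : pzRingType) (x : R) := x ^+ 2 *+ 3 - x ^+ 3 *+ 2.

Section NewtonIdempotent.
Variable R : pzRingType.
Implicit Types x : R.

Lemma newton_idem_defect x :
  newton_idem x ^+ 2 - newton_idem x = (x ^+ 2 - x) ^+ 2 * ((x ^+ 2 - x) *+ 4 - 3%:R).
Proof.
have [R0|R1] := eqVneq (1 : R) 0.
  by rewrite -[LHS]mulr1 -[RHS]mulr1 R0 !mulr0.
(* [horner_morph] needs a nontrivial target: evaluate the identity of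
   [{poly int}] at [x] in [R] seen as such. *)
pose R' : nzRingType := HB.pack R (GRing.PzSemiRing_isNonZero.Build R R1).
have cx : commr_rmorph (intr : int -> R') x := commr_int x.
pose h : {rmorphism {poly int} -> R'} := horner_morph cx.
have hX : h 'X = x by apply: horner_morphX.
have /(congr1 h) : let X : {poly int} := 'X in
    newton_idem X ^+ 2 - newton_idem X = (X ^+ 2 - X) ^+ 2 * ((X ^+ 2 - X) *+ 4 - 3%:R).
  by rewrite /newton_idem; ring.
by rewrite /newton_idem !(rmorphB, rmorphXn, rmorphMn, rmorph_nat, rmorphM, rmorph1) hX.
Qed.

Lemma idem_exprS x k : x * x = x -> x ^+ k.+1 = x.
Proof. by move=> xx; elim: k => [|k IHk]; rewrite ?expr1 // exprS IHk. Qed.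

Lemma newton_idem_id x : x * x = x -> newton_idem x = x.
Proof. by move=> xx; rewrite /newton_idem !idem_exprS // -mulrnBr. Qed.

Lemma idempotent_nilpotent_eq0 x m : x * x = x -> x ^+ m = 0 -> x = 0.
Proof. by move=> xx xm; rewrite -(idem_exprS m xx) exprSr xm mul0r. Qed.

Lemma newton_idem_iter x m : (x ^+ 2 - x) ^+ m = 0 ->
  exists k, iter k (@newton_idem R) x ^+ 2 = iter k (@newton_idem R) x.
Proof.
elim/ltn_ind: m x => m IH x zm.
have [m_lt2 | m_ge2] := ltnP m 2.
  exists 0%N; apply/eqP; rewrite -subr_eq0; apply/eqP.
  case: m m_lt2 zm {IH} => [|[|//]] _ /=; rewrite ?expr1 // expr0 => R0.
  by rewrite -[LHS]mulr1 R0 mulr0.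
(* The defect is squared at each step. *)
have z'm : (newton_idem x ^+ 2 - newton_idem x) ^+ uphalf m = 0.
  set z := x ^+ 2 - x.
  rewrite newton_idem_defect exprMn_comm; last first.
    by apply/commr_sym/commrX/commr_sym/commrB; [apply/commrMn/commr_refl | apply: commr_nat].
  rewrite -exprM (_ : (2 * uphalf m = m + (2 * uphalf m - m))%N); last first.
    by rewrite uphalf_half; lia.
  by rewrite exprD zm !mul0r.
have [|k Hk] := IH _ _ _ z'm; first by rewrite uphalf_half; lia.
by exists k.+1; rewrite iterSr.
Qed.

Lemma newton_idem_closed (P : R -> Prop) : P 1 ->
  (forall x y, P x -> P y -> P (x - y)) -> (forall x y, P x -> P y -> P (x * y)) ->
  forall x, P x -> P (newton_idem x).
Proof.
move=> P1 PB PM x Px.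
have P0 : P 0 by rewrite -(subrr 1); apply: PB.
have PD y y' : P y -> P y' -> P (y + y').
  by move=> Py Py'; rewrite -[y']opprK -[- y']sub0r; apply: PB Py (PB _ _ P0 Py').
have PX k : P (x ^+ k) by elim: k => [|k IHk]; rewrite ?expr0 ?exprS //; apply: PM.
have PMn y k : P y -> P (y *+ k).
  by move=> Py; elim: k => [|k IHk]; rewrite ?mulr0n ?mulrS //; apply: PD.
by apply: PB; apply: PMn.
Qed.

End NewtonIdempotent.

Lemma rmorph_newton_idem (R R' : pzRingType) (f : {rmorphism R -> R'}) (x : R) :
  f (newton_idem x) = newton_idem (f x).
Proof. by rewrite /newton_idem rmorphB !rmorphMn !rmorphXn. Qed.

Section NilpotentMatrix.
Variable B : comPzRingType.

Lemma nilpotent_seq_uniform (T : seq B) : (forall z, z \in T -> nilpotentS z) ->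
  exists p, forall z, z \in T -> z ^+ p = 0.
Proof.
elim: T => [|z T IH] Tnil; first by exists 0%N.
have [q zq] := Tnil z (mem_head z T).
have [p Tp] := IH (fun y Ty => Tnil y (mem_behead (s := z :: T) Ty)).
exists (q + p)%N => y; rewrite inE => /predU1P [-> | /Tp yp].
  by rewrite exprD zq mul0r.
by rewrite exprD yp mulr0.
Qed.

(* Pigeonhole: some element of [T] occurs at least [p] times in [s]. *)
Lemma prod_nilpotent_eq0 (T s : seq B) p : (forall z, z \in T -> z ^+ p = 0) ->
  {subset s <= T} -> (size T * p < size s)%N -> \prod_(y <- s) y = 0.
Proof.
elim: T s => [|z T IH] s Tp sT lt.
  by case: s sT lt => [|y s] // /(_ y (mem_head y s)).
rewrite (bigID (pred1 z)) /=.
have [pc|cp] := leqP p (count (pred1 z) s).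
  rewrite (eq_bigr (fun=> z)) => [|y /eqP //].
  by rewrite big_const_seq iter_mulr_1 -(subnKC pc) exprD Tp ?mem_head // mul0r mul0r.
rewrite -[X in _ * X]big_filter (IH _ _ _ _) ?mulr0 //.
- by move=> y Ty; apply: Tp; rewrite inE Ty orbT.
- move=> y; rewrite mem_filter => /andP [yz /sT]; rewrite inE => /predU1P [yz'|//].
  by rewrite yz' eqxx in yz.
- have lt' : (p + size T * p < size s)%N by rewrite -mulSn.
  rewrite -(count_predC (pred1 z) s) in lt'.
  rewrite size_filter (_ : count _ s = count (predC (pred1 z)) s) //.
  by move: (count _ s) (count (predC _) s) lt' cp => a b; lia.
Qed.

(* [ideal_pow T k] is the [k]-th power of the ideal generated by [T]. *)
Definition ideal_pow (T : seq B) k : B -> Prop :=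
  iter k (fun P => prodsub P (fun z => z \in T)) (fun=> True).

Lemma ideal_pow_nilpotent (T : seq B) p k x : (forall z, z \in T -> z ^+ p = 0) ->
  (size T * p < k)%N -> ideal_pow T k x -> x = 0.
Proof.
move=> Tp; suff ideal_pow_mul s : {subset s <= T} -> (size T * p < k + size s)%N ->
    ideal_pow T k x -> x * \prod_(y <- s) y = 0.
  by move=> lt /(ideal_pow_mul [::]); rewrite big_nil mulr1 addn0; apply.
elim: k x s => [|k IH] x s sT lt /=.
  by rewrite (prod_nilpotent_eq0 Tp sT lt) mulr0.
apply: (prodsub_ind (P := fun x => x * _ = 0)) => [|y y' y0 y'0|y t Py Tt].
- by rewrite mul0r.
- by rewrite mulrDl y0 y'0 addr0.
rewrite (_ : _ * _ * _ = y * \prod_(u <- t :: s) u); last by rewrite big_cons mulrA.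
apply: IH Py => [u|]; first by rewrite inE => /predU1P [->|/sT].
by rewrite /= -addSnnS.
Qed.

Lemma mx_nilpotent n (Z : 'M[B]_n) :
  (forall i j, nilpotentS (Z i j)) -> exists m, Z ^+ m = 0.
Proof.
move=> Znil; pose T := [seq Z ij.1 ij.2 | ij <- enum {: 'I_n * 'I_n}].
have [p Tp] : exists p, forall z, z \in T -> z ^+ p = 0.
  by apply: nilpotent_seq_uniform => _ /mapP [ij _ ->].
have powZ k i j : ideal_pow T k ((Z ^+ k) i j).
  elim: k i j => [//|k IH] i j; rewrite exprSr -mulmxE mxE.
  by apply: prodsub_sum => l; [apply: IH | apply/mapP; exists (l, j); rewrite ?mem_enum].
exists (size T * p).+1; apply/matrixP => i j; rewrite mxE.
exact: ideal_pow_nilpotent Tp _ (powZ _ i j).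
Qed.

End NilpotentMatrix.

Definition mx_over (R : Type) m n (P : R -> Prop) (X : 'M[R]_(m, n)) := forall i j, P (X i j).

Section MatrixOver.
Variables (S : comPzRingType) (A : S -> Prop) (n : nat).
Hypothesis HA : is_subring A.
Implicit Types X Y : 'M[S]_n.

Lemma mx_over1 : mx_over A (1 : 'M[S]_n).
Proof. by move=> i j; rewrite mxE; case: eqP => _; [apply: subring1 | apply: subring0]. Qed.

Lemma mx_overB X Y : mx_over A X -> mx_over A Y -> mx_over A (X - Y).
Proof. by move=> AX AY i j; rewrite !mxE; apply: subringB. Qed.

Lemma mx_overM X Y : mx_over A X -> mx_over A Y -> mx_over A (X * Y).
Proof.
move=> AX AY i j; rewrite -mulmxE mxE.
by apply: (submod_sum (subring_submod HA)) => k; apply: subringM.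
Qed.

End MatrixOver.

Section Reduction.
Variables (B Bred : comPzRingType) (A : B -> Prop) (phi : {rmorphism B -> Bred}).
Hypothesis HA : is_subring A.
Hypothesis ker_phi : forall x : B, phi x = 0 <-> nilpotentS x.

Local Notation Ared := (img phi A).
Local Notation Phi L := (prodsub (img phi L) Ared).

Lemma Ared1 : Ared 1.
Proof. by exists 1; rewrite rmorph1; split => //; apply: subring1. Qed.

Lemma PhiE L : submod A L -> seteq (Phi L) (img phi L).
Proof. by move=> AL; apply: prodsub_ring Ared1 (img_submod phi AL). Qed.

Lemma Phi_submod L : submod A L -> submod Ared (Phi L).
Proof. by move=> AL; apply: submod_seteq (seteq_sym (PhiE AL)) (img_submod phi AL). Qed.

Lemma Phi_invertible L : invertible A L -> invertible Ared (Phi L).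
Proof.
move=> [AL [L' [AL' LL']]]; split; first exact: Phi_submod.
exists (Phi L'); split; first exact: Phi_submod.
apply: seteq_trans (eq_prodsub (PhiE AL) (PhiE AL')) _.
exact: seteq_trans (seteq_sym (img_prodsub phi L L')) (img_seteq phi LL').
Qed.

Lemma Phi_prodsub L L' : submod A L -> submod A L' ->
  seteq (Phi (prodsub L L')) (prodsub (Phi L) (Phi L')).
Proof.
move=> AL AL'; apply: seteq_trans (PhiE (submod_prodsub L' AL)) _.
apply: seteq_trans (img_prodsub phi L L') _.
exact: eq_prodsub (seteq_sym (PhiE AL)) (seteq_sym (PhiE AL')).
Qed.

Lemma nilpotent_sub1 t : phi t = 1 -> nilpotentS (t - 1).
Proof. by move=> t1; apply/ker_phi; rewrite rmorphB rmorph1 t1 subrr. Qed.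

Lemma lift_mulset L L2 L' y : seteq (prodsub L L2) A -> submod A L' ->
  (forall l, L l -> exists l', L' l' /\ phi l' = phi l * y) ->
  exists2 k, phi k = y & forall l, L l -> L' (l * k).
Proof.
move=> LL2 AL' lift.
have [n [f [g [Lf [L2g fg1]]]]] : prodsub L L2 1 by apply/LL2; apply: subring1.
have [f' Ef'] := ClassicalEpsilon.choice _ (fun i => lift _ (Lf i)).
exists (\sum_(i < n) f' i * g i).
  rewrite -[y]mul1r -(rmorph1 phi) fg1 !rmorph_sum mulr_suml.
  by apply: eq_bigr => i _; rewrite !rmorphM (proj2 (Ef' i)) mulrAC.
move=> l Ll; rewrite mulr_sumr; apply: (submod_sum AL') => i.
rewrite mulrCA mulrC; case: AL' => _ _; apply; last exact: (proj1 (Ef' i)).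
by apply/LL2/prodsub_mul.
Qed.

Lemma invertible_mulset_lift L L' y : invertible A L -> invertible A L' -> unitS y ->
  seteq (img phi L') (mulset (img phi L) y) -> exists2 k, unitS k & seteq L' (mulset L k).
Proof.
move=> [AL [L2 [_ LL2]]] [AL' [L3 [_ L'L3]]] [y' yy'] E.
have [k phik Lk] : exists2 k, phi k = y & forall l, L l -> L' (l * k).
  apply: lift_mulset LL2 AL' _ => l Ll.
  have [l' [L'l' El']] : img phi L' (phi l * y) by apply/E; exists (phi l); split => //; exists l.
  by exists l'.
have [k' phik' L'k'] : exists2 k', phi k' = y' & forall l', L' l' -> L (l' * k').
  apply: lift_mulset L'L3 AL _ => l' L'l'.
  have [_ [[l [Ll ->]] El]] : mulset (img phi L) y (phi l') by apply/E; exists l'.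
  by exists l; rewrite El -mulrA yy' mulr1.
have At : A (k * k').
  apply: multiplier_mem (subring_submod HA) LL2 (subring1 HA) _ => l Ll.
  by rewrite mulrA; apply/L'k'/Lk.
have [s As ts] : exists2 s, A s & k * k' * s = 1.
  apply: (unipotent_inv HA At); apply: nilpotent_sub1.
  by rewrite rmorphM phik phik' yy'.
exists k; first by exists (k' * s); rewrite mulrA.
move=> z; split => [L'z | [l [Ll ->]]]; last exact: Lk.
exists (z * k' * s); split.
  by case: AL => _ _ ALM; rewrite mulrC; apply: ALM As (L'k' _ L'z).
by rewrite -{1}[z]mulr1 -ts; ring.
Qed.

Lemma Phi_same_class L L' : invertible A L -> invertible A L' ->
  same_class A L L' <-> same_class Ared (Phi L) (Phi L').
Proof.
move=> iL iL'; have [AL _] := iL; have [AL' _] := iL'.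
rewrite (same_classE _ (subring1 HA) AL) (same_classE _ Ared1 (Phi_submod AL)).
split=> -[x [ux E]].
  exists (phi x); split; first exact: unitS_rmorph.
  apply: seteq_trans (PhiE AL') _; apply: seteq_trans (img_seteq phi E) _.
  exact: seteq_trans (img_mulset phi L x) (eq_mulset _ (seteq_sym (PhiE AL))).
have [k uk Ek] := invertible_mulset_lift iL iL' ux
  (seteq_trans (seteq_sym (PhiE AL')) (seteq_trans E (eq_mulset _ (PhiE AL)))).
by exists k.
Qed.

Lemma lift_idempotent_mx n (E : 'M[Bred]_n) : E *m E = E -> mx_over Ared E ->
  exists e : 'M[B]_n, [/\ e *m e = e, mx_over A e & map_mx phi e = E].
Proof.
move=> EE AE.
have [X [AX XE]] : exists X, mx_over A X /\ map_mx phi X = E.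
  have [f Ef] := ClassicalEpsilon.choice _ (fun ij : 'I_n * 'I_n => AE ij.1 ij.2).
  exists (\matrix_(i, j) f (i, j)); split => [i j|]; first by rewrite mxE; case: (Ef (i, j)).
  by apply/matrixP => i j; rewrite !mxE; case: (Ef (i, j)).
have [m Zm] : exists m, (X ^+ 2 - X) ^+ m = 0.
  apply: mx_nilpotent => i j; apply/ker_phi; rewrite expr2 -mulmxE.
  have /matrixP/(_ i j) : map_mx phi (X *m X - X) = 0 by rewrite map_mxB map_mxM XE EE subrr.
  by rewrite !mxE.
have [k ek] := newton_idem_iter Zm.
exists (iter k (@newton_idem _) X); split; first by rewrite mulmxE -expr2.
  elim: k {ek} => [|k IHk] //=; apply: newton_idem_closed IHk.
  - exact: mx_over1.
  - exact: mx_overB.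
  - exact: mx_overM.
have phi_newton (Y : 'M[B]_n) : map_mx phi (newton_idem Y) = newton_idem (map_mx phi Y).
  exact: rmorph_newton_idem (map_mx phi) Y.
elim: k {ek} => [|k IHk] //=.
by rewrite phi_newton IHk newton_idem_id // -mulmxE.
Qed.

Lemma idempotent_mx_eq n (e f : 'M[B]_n) : e *m e = e -> f *m f = f ->
  e *m f = f -> f *m e = f -> map_mx phi e = map_mx phi f -> e = f.
Proof.
move=> ee ff ef fe phief; apply/eqP; rewrite -subr_eq0; apply/eqP.
have [m gm] : exists m, (e - f) ^+ m = 0.
  apply: mx_nilpotent => i j; apply/ker_phi.
  by have /matrixP/(_ i j) := phief; rewrite !mxE rmorphB => ->; rewrite subrr.
apply: idempotent_nilpotent_eq0 gm.
by rewrite -mulmxE mulmxBl !mulmxBr ee ef fe ff subrr subr0.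
Qed.

Hypothesis phi_surj : forall y : Bred, exists x : B, phi x = y.

(* For any lifts [b0], [c0] of the row and the column, [b := b0 *m e] and
   [c := e *m c0 / u] make [c *m b] an idempotent absorbed by [e] and congruent
   to it modulo the nil kernel, hence equal to it. *)
Lemma rank_one_idempotent_lift n (e : 'M[B]_n) (b' : 'rV[Bred]_n) (c' : 'cV[Bred]_n) :
  e *m e = e -> b' *m c' = 1%:M -> map_mx phi e = c' *m b' ->
  exists b : 'rV[B]_n, exists c : 'cV[B]_n,
    [/\ c *m b = e, b *m c = 1%:M & map_mx phi b = b'].
Proof.
move=> ee bc' phie.
have [g gK] : exists g : Bred -> B, cancel g phi := ClassicalEpsilon.choice _ phi_surj.
pose b0 := map_mx g b'; pose c0 := map_mx g c'.
have phib0 : map_mx phi b0 = b' by apply/matrixP => i j; rewrite !mxE gK.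
have phic0 : map_mx phi c0 = c' by apply/matrixP => i j; rewrite !mxE gK.
pose u := (b0 *m e *m c0) 0 0.
have phiu : phi u = 1.
  have /matrixP/(_ 0 0) : map_mx phi (b0 *m e *m c0) = 1%:M.
    by rewrite !map_mxM phib0 phic0 phie !mulmxA bc' mul1mx bc'.
  by rewrite mxE => ->; rewrite mxE.
have [v _ uv] := unipotent_inv (subringT B) I (nilpotent_sub1 phiu).
pose b := b0 *m e; pose c := v *: (e *m c0).
have bc : b *m c = 1%:M.
  by rewrite -scalemxAr mulmxA -(mulmxA b0) ee [_ *m c0]mx11_scalar scale_scalar_mx mulrC uv.
have phib : map_mx phi b = b' by rewrite map_mxM phib0 phie mulmxA bc' mul1mx.
exists b, c; split => //.
apply: esym; apply: idempotent_mx_eq => //.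
- by rewrite mulmxA -(mulmxA c) bc mulmx1.
- by rewrite mulmxA /c -scalemxAr (mulmxA e) ee.
- by rewrite -mulmxA /b -mulmxA ee.
have phiv : phi v = 1 by rewrite -[phi v]mul1r -phiu -rmorphM uv rmorph1.
rewrite map_mxM phib map_mxZ phiv scale1r map_mxM phie phic0.
by rewrite -[c' *m b' *m c']mulmxA bc' mulmx1.
Qed.

Lemma Phi_surjective M : invertible Ared M ->
  exists L, invertible A L /\ same_class Ared (Phi L) M.
Proof.
move=> [AM [M' [_ MM']]].
have [n [mu [mu' [Mmu [M'mu' mu1]]]]] : prodsub M M' 1 by apply/MM'; apply: Ared1.
pose b' := \row_j mu j; pose c' := \col_i mu' i.
have bc' : b' *m c' = 1%:M.
  apply/matrixP => i j; rewrite !ord1 !mxE /= mu1.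
  by apply: eq_bigr => k _; rewrite !mxE.
have E_idem : (c' *m b') *m (c' *m b') = c' *m b'.
  by rewrite mulmxA -(mulmxA c') bc' mulmx1.
have AE : mx_over Ared (c' *m b').
  by move=> i j; rewrite !mxE big_ord1 !mxE mulrC; apply/MM'/prodsub_mul.
have [e [ee Ae phie]] := lift_idempotent_mx E_idem AE.
have [b [c [cb bc phib]]] := rank_one_idempotent_lift ee bc' phie.
have phib_j j : phi (b 0 j) = mu j.
  by have /matrixP/(_ 0 j) := phib; rewrite !mxE.
exists (span A (fun j => b 0 j)); split.
  apply: (span_invertible (c := fun j => c j 0)) (subring_submod HA) (subring1 HA) _ _.
    by move=> i j; have := Ae j i; rewrite -cb mxE big_ord1 mulrC.
  by have /matrixP/(_ 0 0) := bc; rewrite !mxE.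
have AL : submod A (span A (fun j => b 0 j)) by apply/span_submod/subring_submod.
rewrite (same_classE _ Ared1 (Phi_submod AL)); exists 1; split; first by exists 1; rewrite mulr1.
apply: seteq_trans _ (seteq_sym (mulset1 _)).
apply: seteq_trans _ (seteq_sym (PhiE AL)).
apply: seteq_trans _ (seteq_sym (img_span phi A _)).
apply: span_eq_invertible AM _ _ _ => [j|j z Mz|]; rewrite /= ?phib_j //.
- by apply/MM'/prodsub_mul.
- by rewrite mu1; apply: eq_bigr => j _; rewrite phib_j.
Qed.

End Reduction.

Theorem theorem5p5 (B Bred : comPzRingType) (A : B -> Prop)
    (phi : {rmorphism B -> Bred}) :
  is_subring A ->
  (forall y : Bred, exists x : B, phi x = y) ->
  (forall x : B, phi x = 0 <-> nilpotentS x) ->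
  (* the map L |-> phi(L) A_red, with A_red = phi(A) *)
  let Ared := img phi A in
  let Phi := fun L : B -> Prop => prodsub (img phi L) Ared in
  (* it maps 𝒢(A,B) into 𝒢(A_red,B_red) *)
  (forall L, invertible A L -> invertible Ared (Phi L)) /\
  (* it is a group morphism *)
  (forall L L', invertible A L -> invertible A L' ->
     seteq (Phi (prodsub L L')) (prodsub (Phi L) (Phi L'))) /\
  (* it is well defined and injective on classes *)
  (forall L L', invertible A L -> invertible A L' ->
     (same_class A L L' <-> same_class Ared (Phi L) (Phi L'))) /\
  (* it is surjective on classes *)
  (forall M, invertible Ared M ->
     exists L, invertible A L /\ same_class Ared (Phi L) M).
Proof.
move=> HA phi_surj ker_phi Ared Phi.
split; first exact: Phi_invertible.
split; first by move=> L L' [AL _] [AL' _]; apply: Phi_prodsub.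
split; first exact: Phi_same_class.
exact: Phi_surjective.
Qed.
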